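(* Let $X,Y$ be finite sets with $Y\neq\emptyset$, let $A\in\{-1,1\}^{X\times Y}$ with $\operatorname{Ldim}(A)=d$, and let $\varepsilon\in(0,1/2)$. Then there exist a function $\sigma:X\to\{-1,1\}$ and a subset $S\subseteq Y$ with $|S|\ge \varepsilon^d|Y|$ such that for every $x\in X$, $$\Pr_{y\in S}\bigl[A(x,y)\ne \sigma(x)\bigr]\le \varepsilon,$$ where $y$ is uniform in $S$.
   Context: A mistake tree of depth $d$ over a domain $X$ is a complete binary tree of depth $d$ in which each internal node $\nu$ is labelled with an element $x(\nu)\in X$, and each edge $e$ from a node to a child is labelled with a sign $\sigma(e)\in\{-1,1\}$, where $-1$ indicates the left child and $+1$ the right child. A matrix $A\in\{-1,1\}^{X\times Y}$ shatters a mistake tree of depth $d$ over $X$ if for every root-to-leaf path $(\nu_1,\dots,\nu_{d+1})$ there is a column $y\in Y$ with $A(x(\nu_i),y)=\sigma(\nu_i\nu_{i+1})$ for all $i\in[d]$. The Littlestone dimension $\operatorname{Ldim}(A)$ is the largest $d$ such that $A$ shatters some mistake tree of depth $d$ over $X$ (a tree of depth $0$ is always shattered when $Y\ne\emptyset$). *)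

From mathcomp Require Import all_boot all_order all_algebra.
Set Implicit Arguments. Unset Strict Implicit. Unset Printing Implicit Defensive.

(* Sign convention: a sign in {-1,1} is encoded as a bool, true = +1 (right
   child), false = -1 (left child).  A matrix A in {-1,1}^{X x Y} is a
   function A : X -> Y -> bool. *)

Inductive mtree (X : Type) : Type :=
| MLeaf : mtree X
| MNode : X -> mtree X -> mtree X -> mtree X.
Arguments MLeaf {X}.

Fixpoint mdepth_is (X : Type) (t : mtree X) (d : nat) : bool :=
  match t, d with
  | MLeaf, 0 => true
  | MNode _ l r, d'.+1 => mdepth_is l d' && mdepth_is r d'
  | _, _ => false
  end.

Fixpoint mpath (X : Type) (t : mtree X) (s : seq bool) : option (seq (X * bool)) :=
  match t, s with
  | MLeaf, [::] => Some [::]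
  | MNode x l r, b :: s' =>
      match mpath (if b then r else l) s' with
      | Some p => Some ((x, b) :: p)
      | None => None
      end
  | _, _ => None
  end.

Definition shatters (X Y : Type) (A : X -> Y -> bool) (t : mtree X) : Prop :=
  forall (s : seq bool) (p : seq (X * bool)), mpath t s = Some p ->
    exists y : Y, all (fun xb : X * bool => A xb.1 y == xb.2) p.

Definition Ldim_eq (X Y : Type) (A : X -> Y -> bool) (d : nat) : Prop :=
  (exists t : mtree X, mdepth_is t d /\ shatters A t) /\
  (forall (d' : nat) (t : mtree X), mdepth_is t d' -> shatters A t -> (d' <= d)%N).

From mathcomp Require Import all_boot all_order all_algebra.
From mathcomp Require Import lra.
Import Order.TTheory GRing.Theory Num.Theory.
Local Open Scope ring_scope.
Set Implicit Arguments. Unset Strict Implicit. Unset Printing Implicit Defensive.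

(* Call x balanced on a set S of columns if both sign classes
   {y in S | A x y = b} have more than eps |S| elements.  If no x is balanced,
   the majority sign of each row errs on at most an eps fraction of S.  If
   some x is balanced, recurse into one of its two sign classes, losing a
   factor eps in size; this cannot go on for more than Ldim A steps, since if
   both classes shatter trees of depth k, then S shatters the tree of depth
   k+1 with root x and these two subtrees. *)

Section Shattering.

Variables (X Y : finType) (A : X -> Y -> bool).

Definition shatters_within (S : {set Y}) (t : mtree X) : Prop :=
  forall s p, mpath t s = Some p ->
    exists2 y, y \in S & all (fun xb : X * bool => A xb.1 y == xb.2) p.

Definition agree_set (S : {set Y}) (x : X) (b : bool) : {set Y} :=
  [set y in S | A x y == b].

Lemma agree_set_sub (S : {set Y}) x b : agree_set S x b \subset S.
Proof. by apply/subsetP=> y; rewrite inE => /andP[]. Qed.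

Lemma disagree_setE (S : {set Y}) x b : [set y in S | A x y != b] = agree_set S x (~~ b).
Proof. by apply/setP=> y; rewrite !inE; case: (A x y); case: b. Qed.

Lemma shatters_withinT t : shatters_within setT t -> shatters A t.
Proof. by move=> st s p /st[y _ Ay]; exists y. Qed.

Lemma shatters_within_leaf (S : {set Y}) : (0 < #|S|)%N -> shatters_within S MLeaf.
Proof. by case/card_gt0P=> y yS [|? ?] p //= [<-]; exists y. Qed.

Lemma shatters_within_node (S : {set Y}) x tF tT :
  shatters_within (agree_set S x false) tF ->
  shatters_within (agree_set S x true) tT ->
  shatters_within S (MNode x tF tT).
Proof.
move=> sF sT [|b s] p //=; case E: (mpath _ s) => [p'|] // [<-].
have [y] : exists2 y, y \in agree_set S x b &
    all (fun xb : X * bool => A xb.1 y == xb.2) p'.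
  by case: b E => E; [apply: sT E | apply: sF E].
by rewrite inE => /andP[yS /eqP Axy] Ap'; exists y; rewrite //= Axy eqxx.
Qed.

End Shattering.

Section Approximation.

Variables (R : realFieldType) (X Y : finType) (A : X -> Y -> bool) (eps : R).
Hypotheses (eps_ge0 : 0 <= eps) (eps_le1 : eps <= 1).

Definition approx_by_signs (S : {set Y}) (k : nat) : Prop :=
  exists (sigma : X -> bool) (S' : {set Y}),
    [/\ S' \subset S, eps ^+ k * #|S|%:R <= #|S'|%:R &
        forall x, #|[set y in S' | A x y != sigma x]|%:R <= eps * #|S'|%:R].

Lemma approx_or_balanced (S : {set Y}) k :
  approx_by_signs S k \/
  exists x, forall b, eps * #|S|%:R < #|agree_set A S x b|%:R.
Proof.
have [/existsP[x /forallP bal]|unbal] :=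
  boolP [exists x, [forall b, eps * #|S|%:R < #|agree_set A S x b|%:R]].
  by right; exists x.
left; exists (fun x => eps * #|S|%:R < #|agree_set A S x true|%:R), S; split=> //.
  by rewrite -[leRHS]mul1r ler_wpM2r // exprn_ile1.
move=> x; rewrite disagree_setE.
case: ltP => // maj_true; rewrite leNgt; apply: contra unbal => min.
by apply/existsP; exists x; apply/forallP=> -[].
Qed.

Lemma approx_by_signs_agree_set (S : {set Y}) x b k :
  eps * #|S|%:R < #|agree_set A S x b|%:R ->
  approx_by_signs (agree_set A S x b) k -> approx_by_signs S k.+1.
Proof.
move=> big [sigma [S' [subS' card err]]]; exists sigma, S'; split=> //.
  exact: subset_trans subS' (agree_set_sub _ _ _ _).
apply: le_trans card; rewrite exprSr -mulrA ler_wpM2l ?exprn_ge0 //.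
exact: ltW.
Qed.

Lemma approx_or_shatters k (S : {set Y}) :
  approx_by_signs S k \/
  exists t, mdepth_is t k.+1 /\ shatters_within A S t.
Proof.
elim: k S => [|k IHk] S.
  have [|[x bal]] := approx_or_balanced S 0; first by left.
  have nonempty b : (0 < #|agree_set A S x b|)%N.
    by rewrite -(ltr0n R); apply: le_lt_trans (bal b); rewrite mulr_ge0.
  right; exists (MNode x MLeaf MLeaf); split=> //.
  by apply: shatters_within_node; apply: shatters_within_leaf.
have [|[x bal]] := approx_or_balanced S k.+1; first by left.
have [apxF|[tF [dF sF]]] := IHk (agree_set A S x false).
  by left; apply: approx_by_signs_agree_set apxF.
have [apxT|[tT [dT sT]]] := IHk (agree_set A S x true).
  by left; apply: approx_by_signs_agree_set apxT.
right; exists (MNode x tF tT); split; first by rewrite /= dF dT.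
exact: shatters_within_node.
Qed.

End Approximation.

Theorem proposition2p1 (R : realFieldType) (X Y : finType)
    (A : X -> Y -> bool) (d : nat) (eps : R) :
  (0 < #|Y|)%N ->
  Ldim_eq A d ->
  0 < eps -> eps < 1 / 2 ->
  exists (sigma : X -> bool) (S : {set Y}),
    eps ^+ d * #|Y|%:R <= #|S|%:R /\
    (forall x : X,
       #|[set y in S | A x y != sigma x]|%:R / #|S|%:R <= eps).
Proof.
move=> _ [_ Ldim_le] eps_gt0 eps_lt_half.
have eps_le1 : eps <= 1 by lra.
have [|[t [dt st]]] := approx_or_shatters A (ltW eps_gt0) eps_le1 d setT; last first.
  by have := Ldim_le _ t dt (shatters_withinT st); rewrite ltnn.
move=> [sigma [S [_ card err]]]; exists sigma, S; split; first by rewrite -cardsT.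
(* When S is empty the ratio is 0, as x / 0 = 0. *)
move=> x; have [->|S_gt0] := eqVneq #|S| 0%N; first by rewrite invr0 mulr0 ltW.
by rewrite ler_pdivrMr ?ltr0n ?lt0n.
Qed.
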